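(* Let $G=(V,E)$ be a connected simple graph with $n=|V|\ge 2$ vertices and let $\lambda_2(G)$ be the second smallest eigenvalue of its Laplacian. For vertices $u,v$ let $\mathbb{P}_{uv}=\{P^{(1)}_{uv},\dots,P^{(n_{uv})}_{uv}\}$ be the set of all shortest paths from $u$ to $v$ (so $n_{uv}=|\mathbb{P}_{uv}|\ge1$), and let $d(u,v)$ be their common length. Let $\alpha$ be a path weighting strategy, i.e. for every ordered pair $(u,v)$ a vector $\alpha_{uv}=(\alpha^{(1)}_{uv},\dots,\alpha^{(n_{uv})}_{uv})$ with $\alpha^{(q)}_{uv}\ge 0$ and $\sum_{q=1}^{n_{uv}}\alpha^{(q)}_{uv}=1$. For each edge $k\in E$ define the extended connection-graph-stability score $$C_k(\alpha)=\frac12\sum_{u\in V}\sum_{v\in V} d(u,v)\sum_{q=1}^{n_{uv}}\varphi^{(q)}_{uv}(k)\,\alpha^{(q)}_{uv},\qquad \varphi^{(q)}_{uv}(k)=\begin{cases}1 & k\in P^{(q)}_{uv},\\ 0&\text{otherwise,}\end{cases}$$ and let $C_{\max}(\alpha)=\max_{k\in E}C_k(\alpha)$. Then for every path weighting strategy $\alpha$, $$\lambda_2(G)\ \ge\ \frac{n}{C_{\max}(\alpha)}.$$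
   Context: The Laplacian of $G$ is $L=D-A$ with $A$ the $0/1$ adjacency matrix and $D$ the diagonal degree matrix; eigenvalues $0=\lambda_1\le\lambda_2\le\dots\le\lambda_n$. The length of a path is its number of edges. For $u=v$ the only shortest path is the trivial one of length $0$, contributing nothing. *)

From HB Require Import structures.
From mathcomp Require Import all_boot all_order all_algebra.
Set Implicit Arguments. Unset Strict Implicit. Unset Printing Implicit Defensive.
Import Order.TTheory GRing.Theory Num.Theory.
Local Open Scope ring_scope.

Section Graph.
Variables (n : nat) (e : rel 'I_n).

Definition simple_graph : Prop := symmetric e /\ irreflexive e.

Definition connected_graph : Prop := forall u v : 'I_n, connect e u v.

(* a walk from u to v, given by the list p of vertices visited after u;
   its length (number of edges) is size p *)
Definition is_walk (u v : 'I_n) (p : seq 'I_n) : bool :=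
  path e u p && (last u p == v).

(* d(u,v): the least m such that a walk of length m from u to v exists
   (searched among m < n, which suffices for connected graphs) *)
Definition dist (u v : 'I_n) : nat :=
  find (fun m => [exists p : m.-tuple 'I_n, is_walk u v p]) (iota 0 n).

Definition is_shortest_path (u v : 'I_n) (p : seq 'I_n) : bool :=
  (size p == dist u v) && is_walk u v p.

Definition edge_in_path (x y u : 'I_n) (p : seq 'I_n) : bool :=
  has (fun ab : 'I_n * 'I_n =>
         ((ab.1 == x) && (ab.2 == y)) || ((ab.1 == y) && (ab.2 == x)))
      (zip (u :: p) p).

Variable R : rcfType.

Definition laplacian : 'M[R]_n :=
  \matrix_(i, j) ((if i == j then #|[pred k | e i k]|%:R else 0) - (e i j)%:R).

(* path weighting strategy: alpha u v p is the weight of the shortest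
   path p from u to v (values on non-shortest paths are irrelevant) *)
Definition weighting_strategy (alpha : 'I_n -> 'I_n -> seq 'I_n -> R) : Prop :=
  forall u v : 'I_n,
    (forall p : (dist u v).-tuple 'I_n, is_walk u v p -> 0 <= alpha u v p) /\
    \sum_(p : (dist u v).-tuple 'I_n | is_walk u v p) alpha u v p = 1.

Definition C_score (alpha : 'I_n -> 'I_n -> seq 'I_n -> R) (x y : 'I_n) : R :=
  2^-1 * \sum_(u : 'I_n) \sum_(v : 'I_n)
     (dist u v)%:R *
     \sum_(p : (dist u v).-tuple 'I_n | is_walk u v p)
        (edge_in_path x y u p)%:R * alpha u v p.

(* C_max = maximum over edges (ordered pairs (x,y) with e x y; the score is
   symmetric in x,y).  All scores are >= 0, so starting the max at 0 is harmless. *)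
Definition C_max (alpha : 'I_n -> 'I_n -> seq 'I_n -> R) : R :=
  \big[Num.max/0]_(xy : 'I_n * 'I_n | e xy.1 xy.2) C_score alpha xy.1 xy.2.

End Graph.

Arguments weighting_strategy {n} e {R} alpha.
Arguments C_score {n} e {R} alpha x y.
Arguments C_max {n} e {R} alpha.

From HB Require Import structures.
From mathcomp Require Import all_boot all_order all_algebra.
From mathcomp Require Import ring.
Set Implicit Arguments. Unset Strict Implicit. Unset Printing Implicit Defensive.
Import Order.TTheory GRing.Theory Num.Theory.

(* 1. A shortest walk visits no vertex twice, so each undirected edge is
      traversed at most once along it.
   2. For f : V -> R and a shortest walk p from u to w, telescoping and
      Cauchy-Schwarz give  2 (f u - f w)^2 <= d(u,w) * sum_{k in p} 2 (df_k)^2,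
      where df_k is the difference of f across edge k.
   3. Averaging over the shortest u-w paths with weights alpha_uw and summing
      over (u,w), the coefficient of (df_k)^2 becomes 4 C_k(alpha) <= 4 C_max,
      while for sum f = 0 the left side is 4 n sum f^2 (Lagrange identity).
      Since f^T L f = sum_k (df_k)^2, this is  n |f|^2 <= C_max f^T L f.
   4. Applied to an eigenvector orthogonal to the all-ones vector this gives
      lambda >= n / C_max.  A fixed shear similarity splits the all-ones
      eigenvector off L: char_poly L = X * char_poly B, and every eigenvalue
      of B has such an eigenvector.  Since the sorted spectrum is 0 followed
      by the roots of char_poly B, lambda_2 is one of them. *)

Local Open Scope ring_scope.

Section ShortestWalks.
Variables (n : nat) (e : rel 'I_n).

Lemma walk_shortcut (u : 'I_n) (p : seq 'I_n) :
  path e u p -> ~~ uniq (u :: p) ->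
  exists q, [&& path e u q, last u q == last u p & size q < size p]%N.
Proof.
elim: p u => [|x p IH] u // upath.
case: (boolP (u \in x :: p)) => [ux _ | ux].
  move: (x :: p) ux upath => r /splitPr[p1 p2].
  rewrite cat_path /= => /and3P[_ _ p2path].
  exists p2; apply/and3P; split => //; first by rewrite last_cat.
  by rewrite size_cat /= addnS ltnS leq_addl.
move: upath => /= /andP[eux pxp]; rewrite ux /= => not_uniq.
have [q /and3P[qpath qlast qsize]] := IH x pxp not_uniq.
by exists (x :: q); rewrite /= eux qpath qlast ltnS.
Qed.

Lemma dist_le_size (u w : 'I_n) (q : seq 'I_n) :
  is_walk e u w q -> (size q < n)%N -> (dist e u w <= size q)%N.
Proof.
move=> qwalk qn; rewrite leqNgt; apply/negP => lt_q_dist.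
have := before_find 0%N lt_q_dist; rewrite nth_iota // add0n => /negbT/negP; apply.
by apply/existsP; exists (in_tuple q).
Qed.

Lemma dist_le_n (u w : 'I_n) : (dist e u w <= n)%N.
Proof. by apply: leq_trans (find_size _ _) _; rewrite size_iota. Qed.

Lemma shortest_walk_uniq (u w : 'I_n) (p : seq 'I_n) :
  size p = dist e u w -> is_walk e u w p -> uniq (u :: p).
Proof.
move=> psize /andP[ppath /eqP plast]; apply/negPn/negP => not_uniq.
have [q /and3P[qpath qlast qsize]] := walk_shortcut ppath not_uniq.
have qwalk : is_walk e u w q by rewrite /is_walk qpath (eqP qlast) plast eqxx.
have qn : (size q < n)%N by rewrite (leq_trans qsize) // psize dist_le_n.
by have := dist_le_size qwalk qn; rewrite -psize leqNgt qsize.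
Qed.
End ShortestWalks.

Definition steps (T : Type) (u : T) (p : seq T) : seq (T * T) := zip (u :: p) p.

Definition flip (T : Type) (z : T * T) : T * T := (z.2, z.1).

Lemma mem_steps (T : eqType) (u a b : T) (p : seq T) :
  (a, b) \in steps u p -> (a \in u :: p) && (b \in p).
Proof.
rewrite /steps; elim: p u => [|x p IH] u //=.
rewrite in_cons => /orP[/eqP[-> ->]|/IH /andP[ax bp]].
  by rewrite !in_cons !eqxx.
by rewrite ax in_cons bp !orbT.
Qed.

Lemma steps_edge (T : eqType) (e : rel T) (u a b : T) (p : seq T) :
  path e u p -> (a, b) \in steps u p -> e a b.
Proof.
rewrite /steps; elim: p u => [|x p IH] u //= /andP[eux xp].
by rewrite in_cons => /orP[/eqP[-> ->] //|]; apply: IH.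
Qed.

Lemma steps_flip_uniq (T : eqType) (u : T) (p : seq T) :
  uniq (u :: p) -> uniq (steps u p ++ map (@flip T) (steps u p)).
Proof.
elim: p u => [|x p IH] u //.
rewrite /= in_cons negb_or => /andP[/andP[ux up] /andP[xp puniq]].
have := IH x; rewrite /= xp puniq => /(_ isT).
rewrite /steps /=; set S := zip (x :: p) p => IHx.
have memS a b : (a, b) \in S -> (a \in x :: p) && (b \in p) by apply: mem_steps.
have memSf a b : (a, b) \in map (@flip T) S -> (b, a) \in S.
  by case/mapP => -[c d] cdS [-> ->].
rewrite mem_cat in_cons !negb_or; apply/andP; split.
  apply/and3P; split.
  - by apply/negP => /memS; rewrite in_cons (negPf ux) (negPf up).
  - by rewrite /flip /= xpair_eqE (negPf ux).
  - by apply/negP => /memSf /memS /andP[_]; rewrite (negPf up).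
rewrite -cat1s uniq_catCA /= IHx andbT mem_cat negb_or; apply/andP; split.
  by apply/negP => /memS /andP[_]; rewrite (negPf up).
by apply/negP => /memSf /memS /andP[]; rewrite in_cons (negPf ux) (negPf up).
Qed.

Lemma telescope_steps (R : zmodType) (T : Type) (f : T -> R) (u : T) (p : seq T) :
  \sum_(z <- steps u p) (f z.1 - f z.2) = f u - f (last u p).
Proof.
rewrite /steps; elim: p u => [|x p IH] u /=; first by rewrite big_nil subrr.
by rewrite big_cons IH /= addrA subrK.
Qed.

Lemma lagrange_identity (R : comPzRingType) (T : finType) (g : T -> R) :
  \sum_i \sum_j (g i - g j) ^+ 2 =
  2%:R * (#|T|%:R * \sum_i g i ^+ 2 - (\sum_i g i) ^+ 2).
Proof.
have sum_cst (x : R) : \sum_(j : T) x = #|T|%:R * x.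
  by rewrite sumr_const mulr_natl.
rewrite (eq_bigr (fun i => #|T|%:R * g i ^+ 2 - (g i * \sum_j g j) *+ 2
                          + \sum_j g j ^+ 2)); last first.
  move=> i _; under eq_bigr => j _ do rewrite sqrrB.
  by rewrite !big_split /= sum_cst sumrN sumrMnl mulr_sumr.
rewrite !big_split /= sumrN sumrMnl -mulr_suml -mulr_sumr sum_cst.
by rewrite -expr2; ring.
Qed.

Lemma sum_sqr_le (R : realDomainType) (T : Type) (x0 : T) (r : seq T) (h : T -> R) :
  (\sum_(z <- r) h z) ^+ 2 <= (size r)%:R * \sum_(z <- r) h z ^+ 2.
Proof.
rewrite !(big_nth x0) !big_mkord.
have := lagrange_identity (fun i : 'I_(size r) => h (nth x0 r i)).
rewrite card_ord => lagrange.
have : 0 <= \sum_(i < size r) \sum_(j < size r)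
              (h (nth x0 r i) - h (nth x0 r j)) ^+ 2.
  by apply: sumr_ge0 => i _; apply: sumr_ge0 => j _; apply: sqr_ge0.
by rewrite lagrange pmulr_rge0 // subr_ge0.
Qed.

Section LaplacianForm.
Variables (R : rcfType) (n : nat) (e : rel 'I_n).
Hypothesis esym : symmetric e.

Lemma laplacian_row (f : 'I_n -> R) (i : 'I_n) :
  \sum_j laplacian e R i j * f j = \sum_j (e i j)%:R * (f i - f j).
Proof.
under eq_bigr do rewrite mxE mulrBl.
rewrite sumrB (bigD1 i) //= eqxx big1 ?addr0; last first.
  by move=> j /negPf; rewrite eq_sym => ->; rewrite mul0r.
have -> : #|[pred k | e i k]|%:R = \sum_j (e i j)%:R :> R.
  rewrite -sum1_card natr_sum big_mkcond /=; apply: eq_bigr => j _.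
  by rewrite inE; case: (e i j).
by rewrite mulr_suml -sumrB; apply: eq_bigr => j _; rewrite mulrBr.
Qed.

Lemma laplacian_form (v : 'rV[R]_n) :
  (v *m laplacian e R *m v^T) 0 0 =
  2%:R^-1 * \sum_(xy : 'I_n * 'I_n | e xy.1 xy.2) (v 0 xy.1 - v 0 xy.2) ^+ 2.
Proof.
pose f i := v 0 i.
have -> : (v *m laplacian e R *m v^T) 0 0 =
          \sum_i \sum_j (e i j)%:R * (f i ^+ 2 - f i * f j).
  rewrite mxE; under eq_bigr do rewrite !mxE mulr_suml.
  rewrite exchange_big /=; apply: eq_bigr => i _.
  under eq_bigr do rewrite -mulrA.
  rewrite -mulr_sumr (laplacian_row f) mulr_sumr; apply: eq_bigr => j _.
  by rewrite /f; ring.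
rewrite (eq_bigl (fun xy : 'I_n * 'I_n => xpredT xy.1 && e xy.1 xy.2)) //.
rewrite -(pair_big_dep xpredT e (fun i j => (f i - f j) ^+ 2)) /=.
set S := \sum_(i < n) _.
have -> : \sum_(i < n) \sum_(j < n | e i j) (f i - f j) ^+ 2 = S + S.
  rewrite {2}/S exchange_big /= -big_split /=; apply: eq_bigr => i _.
  rewrite -big_split /= big_mkcond /=; apply: eq_bigr => j _.
  by rewrite esym; case: (e j i) => /=; ring.
by rewrite -mulr2n -[S *+ 2]mulr_natl mulKf ?pnatr_eq0.
Qed.
End LaplacianForm.

Section PathBound.
Variables (R : realDomainType) (n : nat) (e : rel 'I_n).
Hypothesis esym : symmetric e.

(* Counting each step in both directions doubles the sum over the steps;
   since the steps are distinct, this is at most the sum over the directed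
   edges traversed by the walk. *)
Lemma steps_le_edges (u : 'I_n) (p : seq 'I_n) (D : 'I_n * 'I_n -> R) :
  path e u p -> uniq (u :: p) -> (forall xy, 0 <= D xy) ->
  (forall xy, D (flip xy) = D xy) ->
  2%:R * \sum_(z <- steps u p) D z <=
  \sum_(xy : 'I_n * 'I_n | e xy.1 xy.2) (edge_in_path xy.1 xy.2 u p)%:R * D xy.
Proof.
move=> ppath puniq D_ge0 D_flip.
have -> : 2%:R * \sum_(z <- steps u p) D z =
          \sum_(z <- steps u p ++ map (@flip _) (steps u p)) D z.
  rewrite big_cat big_map mulr2n mulrDl mul1r; congr (_ + _).
  by apply: eq_bigr => z _; rewrite D_flip.
rewrite big_uniq ?steps_flip_uniq //= big_mkcond [X in _ <= X]big_mkcond /=.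
apply: ler_sum => z _; case: ifPn => [|_]; last first.
  by case: ifP => // _; rewrite mulr_ge0 ?ler0n.
rewrite mem_cat => zsteps.
have [ez zin] : e z.1 z.2 /\ edge_in_path z.1 z.2 u p.
  case/orP: zsteps => [|/mapP[[a b] abs ->]] /=.
    case: z => a b abs; split; first exact: steps_edge ppath abs.
    by apply/hasP; exists (a, b) => //=; rewrite !eqxx.
  split; first by rewrite esym; exact: steps_edge ppath abs.
  by apply/hasP; exists (a, b) => //=; rewrite !eqxx orbT.
by rewrite ez zin mul1r.
Qed.

Lemma shortest_path_bound (u w : 'I_n) (p : seq 'I_n) (f : 'I_n -> R) :
  size p = dist e u w -> is_walk e u w p ->
  2%:R * (f u - f w) ^+ 2 <= (dist e u w)%:R *
    \sum_(xy : 'I_n * 'I_n | e xy.1 xy.2)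
       (edge_in_path xy.1 xy.2 u p)%:R * (f xy.1 - f xy.2) ^+ 2.
Proof.
move=> psize pwalk; have puniq := shortest_walk_uniq psize pwalk.
move: pwalk => /andP[ppath /eqP plast].
pose D (z : 'I_n * 'I_n) := (f z.1 - f z.2) ^+ 2.
have cauchy_schwarz : (f u - f w) ^+ 2 <= (dist e u w)%:R * \sum_(z <- steps u p) D z.
  rewrite -psize -plast -telescope_steps.
  have -> : size p = size (steps u p) by rewrite size_zip /= (minn_idPr (leqnSn _)).
  exact: sum_sqr_le (u, u) _ _.
apply: le_trans (_ : _ <= (dist e u w)%:R * (2%:R * \sum_(z <- steps u p) D z)) _.
  by rewrite [leRHS]mulrCA ler_pM2l ?ltr0n.
apply: ler_wpM2l; first exact: ler0n.
apply: steps_le_edges => // [xy|xy]; first exact: sqr_ge0.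
by rewrite /D -sqrrN opprB.
Qed.
End PathBound.

Section ScoreBound.
Variables (R : rcfType) (n : nat) (e : rel 'I_n).
Hypothesis esym : symmetric e.
Variable alpha : 'I_n -> 'I_n -> seq 'I_n -> R.
Hypothesis alpha_ws : weighting_strategy e alpha.

Lemma score_le_Cmax (x y : 'I_n) : e x y -> C_score e alpha x y <= C_max e alpha.
Proof. by move=> exy; rewrite /C_max (bigD1 (x, y)) //= le_max lexx. Qed.

Lemma Cmax_ge0 : 0 <= C_max e alpha.
Proof.
rewrite /C_max; elim/big_ind: _ => //; first by move=> a b a0 b0; rewrite le_max a0.
move=> xy _; rewrite /C_score mulr_ge0 ?invr_ge0 ?ler0n //.
apply: sumr_ge0 => u _; apply: sumr_ge0 => w _; rewrite mulr_ge0 ?ler0n //.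
apply: sumr_ge0 => p pwalk; rewrite mulr_ge0 ?ler0n //.
exact: (proj1 (alpha_ws u w)).
Qed.

Lemma regroup_by_edges (D : 'I_n * 'I_n -> R) :
  \sum_u \sum_w \sum_(p : (dist e u w).-tuple 'I_n | is_walk e u w p)
     alpha u w p * ((dist e u w)%:R *
       \sum_(xy : 'I_n * 'I_n | e xy.1 xy.2) (edge_in_path xy.1 xy.2 u p)%:R * D xy)
  = \sum_(xy : 'I_n * 'I_n | e xy.1 xy.2) D xy * (2%:R * C_score e alpha xy.1 xy.2).
Proof.
under [RHS]eq_bigr => xy _ do
  rewrite /C_score [X in D xy * X]mulrA mulfV ?mul1r ?pnatr_eq0 //.
transitivity (\sum_u \sum_w \sum_(xy : 'I_n * 'I_n | e xy.1 xy.2)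
     \sum_(p : (dist e u w).-tuple 'I_n | is_walk e u w p)
     alpha u w p * ((dist e u w)%:R * ((edge_in_path xy.1 xy.2 u p)%:R * D xy))).
  apply: eq_bigr => u _; apply: eq_bigr => w _.
  by rewrite [RHS]exchange_big /=; apply: eq_bigr => p _; rewrite !mulr_sumr.
rewrite (eq_bigr _ (fun u _ => exchange_big _ _ _ _ _ _)) /= exchange_big /=.
apply: eq_bigr => xy _; rewrite mulr_sumr; apply: eq_bigr => u _.
rewrite mulr_sumr; apply: eq_bigr => w _; rewrite mulrA mulr_sumr.
by apply: eq_bigr => p _; ring.
Qed.

(* The Poincare-type inequality  n |f|^2 <= C_max f^T L f  for f orthogonal
   to 1, with the quadratic form written as in laplacian_form. *)
Lemma poincare_inequality (f : 'I_n -> R) : \sum_i f i = 0 ->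
  n%:R * \sum_i f i ^+ 2 <= C_max e alpha *
    (2%:R^-1 * \sum_(xy : 'I_n * 'I_n | e xy.1 xy.2) (f xy.1 - f xy.2) ^+ 2).
Proof.
move=> f_sum0; set SD := \sum_(xy : 'I_n * 'I_n | _) _.
rewrite -(ler_pM2l (_ : 0 < 2%:R * 2%:R :> R)) ?mulr_gt0 ?ltr0n // -mulrA.
have -> : 2%:R * 2%:R * (C_max e alpha * (2%:R^-1 * SD)) = SD * (2%:R * C_max e alpha).
  by field.
have <- : \sum_u \sum_w 2%:R * (f u - f w) ^+ 2 =
          2%:R * (2%:R * (n%:R * \sum_i f i ^+ 2)).
  under eq_bigr do rewrite -mulr_sumr.
  by rewrite -mulr_sumr lagrange_identity card_ord f_sum0 expr0n subr0.
apply: le_trans (_ : _ <= \sum_(xy : 'I_n * 'I_n | e xy.1 xy.2)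
    (f xy.1 - f xy.2) ^+ 2 * (2%:R * C_score e alpha xy.1 xy.2)) _.
  rewrite -(regroup_by_edges (fun xy => (f xy.1 - f xy.2) ^+ 2)).
  apply: ler_sum => u _; apply: ler_sum => w _.
  have [alpha_ge0 alpha_sum1] := alpha_ws u w.
  rewrite -[X in X <= _]mul1r -{1}alpha_sum1 mulr_suml.
  apply: ler_sum => p pwalk; apply: ler_wpM2l; first exact: alpha_ge0.
  exact: shortest_path_bound (size_tuple p) pwalk.
rewrite mulr_suml; apply: ler_sum => xy exy.
by rewrite ler_wpM2l ?sqr_ge0 // ler_wpM2l ?ler0n // score_le_Cmax.
Qed.

Lemma eigenvalue_bound (v : 'rV[R]_n) (l : R) : (0 < n)%N ->
  v != 0 -> v *m laplacian e R = l *: v -> \sum_i v 0 i = 0 ->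
  n%:R / C_max e alpha <= l.
Proof.
move=> n_gt0 v_neq0 v_eig v_sum0.
set S2 := \sum_i v 0 i ^+ 2.
have form_eq : (v *m laplacian e R *m v^T) 0 0 = l * S2.
  rewrite v_eig -scalemxAl mxE mxE; congr (_ * _).
  by apply: eq_bigr => i _; rewrite mxE expr2.
have := poincare_inequality v_sum0; rewrite -laplacian_form // form_eq.
have S2_gt0 : 0 < S2.
  rewrite lt0r sumr_ge0 ?andbT => [|i _]; last exact: sqr_ge0.
  apply: contra v_neq0 => /eqP S2_0; apply/eqP/rowP => i; rewrite mxE.
  have := @psumr_eq0P _ _ xpredT _ (fun j _ => sqr_ge0 (v 0 j)) S2_0 i isT.
  by move/eqP; rewrite sqrf_eq0 => /eqP.
rewrite mulrA ler_pM2r // => n_le.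
have Cmax_gt0 : 0 < C_max e alpha.
  rewrite lt0r Cmax_ge0 andbT; apply: contraTneq n_le => ->.
  by rewrite mul0r -ltNge ltr0n.
by rewrite ler_pdivrMr // mulrC.
Qed.
End ScoreBound.

(* Step 4b: splitting the all-ones eigenvector off a matrix with zero row
   sums, using the shear P (subtract the first coordinate) and its inverse. *)
Section Deflation.
Variables (R : fieldType) (k : nat).

Definition shear : 'M[R]_k.+1 :=
  \matrix_(i, j) (if j == 0 then (if i == 0 then 1 else -1) else (i == j)%:R).
Definition unshear : 'M[R]_k.+1 := \matrix_(i, j) (if j == 0 then 1 else (i == j)%:R).

Lemma shearK : shear *m unshear = 1%:M.
Proof.
apply/matrixP => i j; rewrite !mxE.
case: (eqVneq j 0) => [->|j_neq0]; last first.
  rewrite (bigD1 j) //= big1 ?addr0 => [|l l_neq_j]; last first.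
    by rewrite [unshear l j]mxE (negPf j_neq0) (negPf l_neq_j) mulr0.
  by rewrite !mxE (negPf j_neq0) eqxx mulr1.
under eq_bigr do rewrite [unshear _ 0]mxE eqxx mulr1.
rewrite (bigD1 0) //= mxE eqxx; case: (eqVneq i 0) => [->|i_neq0].
  by rewrite big1 ?addr0 // => l l_neq0; rewrite mxE (negPf l_neq0) eq_sym (negPf l_neq0).
rewrite (bigD1 i) //= big1 ?addr0 => [|l /andP[l_neq0 l_neq_i]].
  by rewrite !mxE (negPf i_neq0) eqxx addNr.
by rewrite mxE (negPf l_neq0) eq_sym (negPf l_neq_i).
Qed.

Lemma unshearK : unshear *m shear = 1%:M.
Proof. exact: mulmx1C shearK. Qed.

Lemma shear_conj_col0 (L : 'M[R]_k.+1) : (forall i, \sum_j L i j = 0) ->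
  forall i, (shear *m L *m unshear) i 0 = 0.
Proof.
move=> row_sum0 i; rewrite mxE.
under eq_bigr do rewrite [unshear _ 0]mxE eqxx mulr1 mxE.
by rewrite exchange_big big1 // => l _; rewrite -mulr_sumr row_sum0 mulr0.
Qed.

Lemma char_poly_conj (P Q L : 'M[R]_k.+1) :
  P *m Q = 1%:M -> char_poly (P *m L *m Q) = char_poly L.
Proof.
move=> PQ; rewrite /char_poly /char_poly_mx !map_mxM.
have PQ' : map_mx polyC P *m map_mx polyC Q = 1%:M :> 'M[{poly R}]_k.+1.
  by rewrite -map_mxM PQ map_mx1.
have -> : 'X%:M - map_mx polyC P *m map_mx polyC L *m map_mx polyC Q =
    map_mx polyC P *m ('X%:M - map_mx polyC L) *m map_mx polyC Q.
  by rewrite mulmxBr mulmxBl scalar_mxC -(mulmxA 'X%:M) PQ' mulmx1.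
by rewrite !det_mulmx mulrC mulrA -det_mulmx mulmx1C // det1 mul1r.
Qed.

Lemma char_poly_col0 (A : 'M[R]_k.+1) : (forall i, A i 0 = 0) ->
  char_poly A = 'X * char_poly (row' 0 (col' 0 A)).
Proof.
move=> A_col0; rewrite /char_poly (expand_det_col _ 0) (bigD1 0) //= big1 ?addr0.
  by rewrite /cofactor row'_col'_char_poly_mx !mxE A_col0 eqxx expr0 mul1r subr0.
move=> i i_neq0; rewrite !mxE A_col0 (negPf i_neq0) /=.
by rewrite mulr0n polyC0 subr0 mul0r.
Qed.

Lemma eigenvector_extend (A : 'M[R]_k.+1) (w : 'rV[R]_k) (l : R) :
  (forall i, A i 0 = 0) -> w *m row' 0 (col' 0 A) = l *: w ->
  let y := \row_j oapp (fun j' => w 0 j') 0 (unlift 0 j) in y *m A = l *: y.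
Proof.
move=> A_col0 w_eig y; apply/rowP => j.
rewrite !mxE big_ord_recl !mxE unlift_none mul0r add0r.
under eq_bigr do rewrite mxE liftK /=.
case: unliftP => [j'|] ->; last by rewrite mulr0 big1 // => i _; rewrite A_col0 mulr0.
have := congr1 (fun M : 'rV[R]_k => M 0 j') w_eig; rewrite !mxE => <-.
by apply: eq_bigr => i _; rewrite !mxE.
Qed.

Lemma deflated_eigenvector (L : 'M[R]_k.+1) (x : R) :
  (forall i, \sum_j L i j = 0) ->
  root (char_poly (row' 0 (col' 0 (shear *m L *m unshear)))) x ->
  exists2 v : 'rV[R]_k.+1, v != 0 & (v *m L = x *: v) /\ \sum_i v 0 i = 0.
Proof.
move=> row_sum0; rewrite -eigenvalue_root_char => /eigenvalueP [w w_eig w_neq0].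
have := eigenvector_extend (shear_conj_col0 row_sum0) w_eig.
set y := \row_j _ => y_eig.
exists (y *m shear); last split.
- apply: contra w_neq0 => /eqP v0; apply/eqP/rowP => j.
  have y0 : y = 0 by rewrite -[y]mulmx1 -shearK mulmxA v0 mul0mx.
  by have := congr1 (fun M : 'rV[R]_k.+1 => M 0 (lift 0 j)) y0; rewrite !mxE liftK.
- have -> : y *m shear *m L = y *m (shear *m L *m unshear) *m shear.
    by rewrite !mulmxA -(mulmxA _ unshear) unshearK mulmx1.
  by rewrite y_eig scalemxAl.
transitivity ((y *m shear *m unshear) 0 0).
  by rewrite [RHS]mxE; apply: eq_bigr => i _; rewrite [unshear i 0]mxE eqxx mulr1.
by rewrite -mulmxA shearK mulmx1 mxE unlift_none.
Qed.
End Deflation.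

Lemma second_root_bound (R : realDomainType) (s : seq R) (q : {poly R}) (c : R) :
  (2 <= size s)%N -> sorted <=%R s ->
  \prod_(x <- s) ('X - x%:P) = 'X * q ->
  (forall x, root q x -> c <= x) -> c <= s`_1.
Proof.
move=> s_size s_sorted s_prod q_bound.
have s0 : 0 \in s by rewrite -root_prod_XsubC s_prod rootM rootX eqxx.
have q_prod : q = \prod_(x <- rem 0 s) ('X - x%:P).
  apply: (mulfI (negbT (polyX_eq0 R))); rewrite -s_prod.
  by rewrite (perm_big _ (perm_to_rem s0)) big_cons polyC0 subr0.
have rem_bound x : x \in rem 0 s -> c <= x.
  by move=> xs; apply: q_bound; rewrite q_prod root_prod_XsubC.
case: s s_size s_sorted s0 rem_bound {s_prod q_prod} => [|x0 [|x1 r]] //= _.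
move=> /andP[x01 _] _ rem_bound.
case: (eqVneq x0 0) => [x0_0|x0_neq0] in rem_bound.
  exact: rem_bound (mem_head _ _).
exact: le_trans (rem_bound _ (mem_head _ _)) x01.
Qed.

Theorem theorem2 (R : rcfType) (n : nat) (e : rel 'I_n)
  (Hn : (2 <= n)%N) (Hsimple : simple_graph e) (Hconn : connected_graph e)
  (s : seq R)
  (Hs : char_poly (laplacian e R) = \prod_(x <- s) ('X - x%:P))
  (Hsorted : sorted <=%R s)
  (alpha : 'I_n -> 'I_n -> seq 'I_n -> R)
  (Halpha : weighting_strategy e alpha) :
  n%:R / C_max e alpha <= s`_1.
Proof.
case: n e Hn Hsimple Hconn Hs alpha Halpha => [//|k] e Hn [esym _] _ Hs alpha Halpha.
set L := laplacian e R.
have row_sum0 i : \sum_j L i j = 0.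
  under eq_bigr do rewrite -[L i _]mulr1.
  by rewrite (laplacian_row e (fun _ => 1)) big1 // => j _; rewrite subrr mulr0.
apply: (second_root_bound _ Hsorted).
- by have := size_char_poly L; rewrite Hs size_prod_XsubC => -[->].
- rewrite -Hs -(char_poly_conj L (shearK R k)) char_poly_col0 //.
  exact: shear_conj_col0.
- move=> x /(deflated_eigenvector row_sum0) [v v_neq0 [v_eig v_sum0]].
  exact: (eigenvalue_bound esym Halpha (ltn0Sn k) v_neq0 v_eig v_sum0).
Qed.
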